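(* Let $f: \{0, 1\}^n \to \{0, 1\}$ be a Boolean function with M\''obius support $\mathcal{S}_f$. For any two distinct sets $S,T \in \mathcal{S}_f$ there exists a set $p(\{S, T\}) \subseteq \mathcal{S}_f$ such that (i) $p(\{S, T\}) \neq \{S,T\}$; (ii) $|p(\{S, T\})| = 2$ if $S \cup T \notin \mathcal{S}_f$ and $|p(\{S, T\})| = 1$ if $S \cup T \in \mathcal{S}_f$; and (iii) $\bigcup_{U \in p(\{S, T\})} U= S \cup T$.
   Context: Every $f:\{0,1\}^n\to\{0,1\}$ has a unique M\''obius expansion $f=\sum_{S\subseteq[n]}\widetilde f(S)\mathsf{AND}_S$ with real coefficients, where $\mathsf{AND}_S(x)=\prod_{i\in S}x_i$; its M\''obius support is $\mathcal{S}_f=\{S\subseteq[n]:\widetilde f(S)\ne0\}$. *)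

From HB Require Import structures.
From mathcomp Require Import all_boot all_order all_algebra.
From mathcomp Require Import reals.
Set Implicit Arguments. Unset Strict Implicit. Unset Printing Implicit Defensive.
Import Order.TTheory GRing.Theory Num.Theory.
Local Open Scope ring_scope.

Definition AND_ (R : realType) (n : nat) (S : {set 'I_n}) (x : {ffun 'I_n -> bool}) : R :=
  \prod_(i in S) ((x i)%:R : R).

(* c is a Moebius expansion of f: f = sum_S c(S) AND_S  (as real-valued functions).
   Such c exists and is unique; it is "the" Moebius expansion of f. *)
Definition is_mobius_expansion (R : realType) (n : nat)
  (f : {ffun 'I_n -> bool} -> bool) (c : {set 'I_n} -> R) : Prop :=
  forall x : {ffun 'I_n -> bool}, ((f x)%:R : R) = \sum_(S : {set 'I_n}) c S * AND_ R S x.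

Definition mobius_support (R : realType) (n : nat) (c : {set 'I_n} -> R) : {set {set 'I_n}} :=
  [set S | c S != 0].

From HB Require Import structures.
From mathcomp Require Import all_boot all_order all_algebra.
From mathcomp Require Import reals.
Set Implicit Arguments. Unset Strict Implicit. Unset Printing Implicit Defensive.
Import Order.TTheory GRing.Theory Num.Theory.
Local Open Scope ring_scope.

(* Since f is 0/1-valued, f = f^2; expanding the square, the Moebius
   coefficients satisfy c(W) = sum_{U ∪ V = W} c(U) c(V).  If S ∪ T is not in
   the support, the left side vanishes for W = S ∪ T while the pairs (S, T)
   and (T, S) contribute 2 c(S) c(T) != 0, so another pair (U, V) of support
   sets with U ∪ V = S ∪ T must exist; U != V because c(U ∪ U) = c(S ∪ T) = 0. *)

Section UnionConvolution.
Variable T : finType.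
Implicit Types A B S U V W : {set T}.

Lemma subset_sum_eq0 (R : nmodType) (d : {set T} -> R) :
  (forall W, \sum_(S : {set T} | S \subset W) d S = 0) -> forall W, d W = 0.
Proof.
move=> zd W; elim: {W}_.+1 {-2}W (ltnSn #|W|) => // k IHk W ltWk.
rewrite -(zd W) (bigD1 W) //= big1 ?addr0 // => S /andP[sSW nSW].
by apply: IHk; apply: leq_trans (proper_card _) ltWk; rewrite properEneq nSW.
Qed.

Definition union_conv (R : pzSemiRingType) (a b : {set T} -> R) W : R :=
  \sum_(p : {set T} * {set T} | p.1 :|: p.2 == W) a p.1 * b p.2.

Lemma subset_sum_union_conv (R : pzSemiRingType) (a b : {set T} -> R) W :
  \sum_(S : {set T} | S \subset W) union_conv a b S =
  (\sum_(U : {set T} | U \subset W) a U) * (\sum_(V : {set T} | V \subset W) b V).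
Proof.
rewrite [RHS]big_distrlr [RHS]pair_big_dep /=.
under [RHS]eq_bigl => p do rewrite -subUset.
rewrite [RHS](partition_big (fun p => p.1 :|: p.2) (fun S => S \subset W)) //=.
apply: eq_bigr => S sSW; apply: eq_bigl => p.
by case: eqP => [-> | _]; rewrite ?sSW ?andbF.
Qed.

Lemma set2_inj A B U V :
  U != V -> [set U; V] = [set A; B] -> (U, V) \in [:: (A, B); (B, A)].
Proof.
move=> nUV eUV; have := set21 U V; have := set22 U V; rewrite eUV !inE.
by case/pred2P=> eV /pred2P[] eU; move: nUV; rewrite eU eV ?eqxx ?orbT.
Qed.

Lemma union_conv_off_diagonal (R : numDomainType) (a : {set T} -> R) A B :
  A != B -> a A != 0 -> a B != 0 -> union_conv a a (A :|: B) = 0 ->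
  exists U V, [/\ U :|: V = A :|: B, a U != 0, a V != 0
                & (U, V) \notin [:: (A, B); (B, A)]].
Proof.
move=> nAB aA aB.
case: (pickP [pred p : {set T} * {set T} | [&& p.1 :|: p.2 == A :|: B,
    a p.1 != 0, a p.2 != 0 & p \notin [:: (A, B); (B, A)]]]).
  by move=> [U V] /and4P[/eqP eUV aU aV nUV] _; exists U, V.
move=> others; rewrite /union_conv (bigD1 (A, B)) //= (bigD1 (B, A)) /=; last first.
  by rewrite setUC eqxx xpair_eqE negb_and eq_sym nAB.
rewrite big1 => [|p /andP[/andP[pAB pnAB] pnBA]]; last first.
  have := others p; rewrite /= pAB !inE negb_or pnAB pnBA /= !andbT.
  by move/negbT; rewrite negb_and !negbK => /orP[]/eqP->; rewrite ?mul0r ?mulr0.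
rewrite addr0 [a B * _]mulrC -mulr2n => /eqP.
by rewrite mulrn_eq0 /= mulf_eq0 (negbTE aA) (negbTE aB).
Qed.

End UnionConvolution.

Section MoebiusExpansion.
Variables (R : realType) (n : nat).
Implicit Types (S W : {set 'I_n}) (f : {ffun 'I_n -> bool} -> bool) (c : {set 'I_n} -> R).

Definition indicator W : {ffun 'I_n -> bool} := [ffun i => i \in W].

Lemma AND_indicator S W : AND_ R S (indicator W) = (S \subset W)%:R.
Proof.
rewrite /AND_; have [sSW | nsSW] := boolP (S \subset W).
  by apply: big1 => i iS; rewrite ffunE (subsetP sSW i iS).
have /set0Pn[i /setDP[iS niW]] : S :\: W != set0 by rewrite setD_eq0.
by rewrite (bigD1 i) //= ffunE (negbTE niW) mul0r.
Qed.

Lemma mobius_expansion_indicator f c : is_mobius_expansion f c ->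
  forall W, (f (indicator W))%:R = \sum_(S : {set 'I_n} | S \subset W) c S.
Proof.
move=> hc W; rewrite hc [RHS]big_mkcond /=; apply: eq_bigr => S _.
by rewrite AND_indicator; case: ifP; rewrite ?mulr1 ?mulr0.
Qed.

Lemma mobius_coef_union_conv f c : is_mobius_expansion f c ->
  forall W, c W = union_conv c c W.
Proof.
move=> hc W; apply/eqP; rewrite -subr_eq0; apply/eqP; move: W.
apply: subset_sum_eq0 => W.
rewrite sumrB subset_sum_union_conv -!(mobius_expansion_indicator hc).
by case: (f _); rewrite ?mulr1 ?mulr0 subrr.
Qed.

End MoebiusExpansion.

Theorem claim4p5 (R : realType) (n : nat) (f : {ffun 'I_n -> bool} -> bool)
  (c : {set 'I_n} -> R) (hc : is_mobius_expansion f c) (S T : {set 'I_n}) :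
  S \in mobius_support c -> T \in mobius_support c -> S != T ->
  exists p : {set {set 'I_n}},
    [/\ p \subset mobius_support c,
        p != [set S; T],
        (if S :|: T \in mobius_support c then #|p| = 1%N else #|p| = 2%N)
      & \bigcup_(U in p) U = S :|: T].
Proof.
move=> cS cT nST; have [cST | ] := boolP (S :|: T \in mobius_support c).
  exists [set S :|: T]; split.
  - by rewrite sub1set.
  - by apply/eqP => eST; move: (cards2 S T); rewrite -eST cards1 nST.
  - by rewrite cards1.
  - by rewrite big_set1.
move=> ncST; have cST : c (S :|: T) = 0 by apply/eqP; rewrite inE negbK in ncST.
rewrite !inE in cS cT.
have conv0 : union_conv c c (S :|: T) = 0 by rewrite -(mobius_coef_union_conv hc).
have [U [V [eUV cU cV nUV_ST]]] := union_conv_off_diagonal nST cS cT conv0.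
have nUV : U != V.
  by apply: contraNneq cU => eUU; rewrite -[U]setUid {2}eUU eUV cST.
exists [set U; V]; split.
- by apply/subsetP => X; rewrite !inE => /pred2P[]->.
- by apply: contraNneq nUV_ST; exact: set2_inj.
- by rewrite cards2 nUV.
- by rewrite big_setU1 ?big_set1 // inE.
Qed.
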